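(* Let $M=p_1^{n_1}\cdots p_K^{n_K}$ with distinct primes and $n_\nu\in\mathbb{N}$, and let $A\oplus B=\mathbb{Z}_M$. Fix distinct $i,j\in\{1,\dots,K\}$, let $z\in\mathbb{Z}_M$ and $\Lambda_{ij}=\Lambda(z,M/(p_ip_j))$. Suppose that $a_0*F_i\subset A$ for some $a_0\in\Sigma_A(\Lambda_{ij})$. Then $\Sigma_A(\Lambda_{ij})\subset\Pi(a_0,p_j^{n_j-1})$.
   Context: $A\oplus B=\mathbb{Z}_M$ means every element of $\mathbb{Z}_M$ is uniquely $a+b$ with $a\in A$, $b\in B$. For $d\mid M$, $\Lambda(x,d)=\{x'\in\mathbb{Z}_M: d\mid x-x'\}$, and $\Pi(x,p^\alpha)=\Lambda(x,p^\alpha)$. $F_i=\{0,M/p_i,\dots,(p_i-1)M/p_i\}$, $x*F_i=\{x+f:f\in F_i\}$. For $Z\subset\mathbb{Z}_M$, $\Sigma_A(Z)=\{a\in A:a+b\in Z\text{ for some }b\in B\}$. *)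

From mathcomp Require Import all_boot all_order all_algebra.
Set Implicit Arguments. Unset Strict Implicit. Unset Printing Implicit Defensive.
Import GRing.Theory.
Local Open Scope ring_scope.

(* Z_M is modelled by 'Z_M (valid since M >= 2 in all uses). *)

Definition tiling (M : nat) (A B : {set 'Z_M}) : Prop :=
  (forall c : 'Z_M, exists a b, [/\ a \in A, b \in B & c = a + b]) /\
  (forall a a' b b' : 'Z_M, a \in A -> a' \in A -> b \in B -> b' \in B ->
      a + b = a' + b' -> a = a' /\ b = b').

Definition Lambda (M : nat) (x : 'Z_M) (d : nat) : {set 'Z_M} :=
  [set x' : 'Z_M | (d %| nat_of_ord (x - x')%R)%N].

Definition Pi (M : nat) (x : 'Z_M) (p alpha : nat) : {set 'Z_M} :=
  Lambda x (p ^ alpha)%N.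

Definition Fset (M p : nat) : {set 'Z_M} :=
  [set ((k * (M %/ p))%N)%:R | k : 'I_p].

Definition shiftF (M p : nat) (x : 'Z_M) : {set 'Z_M} :=
  [set x + f | f in Fset M p].

Definition SigmaA (M : nat) (A B Z : {set 'Z_M}) : {set 'Z_M} :=
  [set a in A | [exists b in B, (a + b) \in Z]].

From mathcomp Require Import all_boot all_order all_algebra.
From mathcomp Require Import ring.
Set Implicit Arguments. Unset Strict Implicit. Unset Printing Implicit Defensive.
Import GRing.Theory.
Local Open Scope ring_scope.

(* Tijdeman's dilation theorem: if A (+) B = Z_M and u is coprime to M, then
   A (+) uB = Z_M.  For a prime p not dividing #|B|, work in the group ring
   F_p[Z_M], where B(X)^p = B(X^p); then A(X) B(X^p) = A(X) B(X) B(X)^(p-1) is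
   #|B|^(p-1) times the sum of all group elements, so every c has a
   decomposition c = a + p b, and counting shows it is unique.  Consequently,
   if a, a' in A and b, b' in B satisfy gcd(a - a', M) = gcd(b' - b, M), then
   a - a' = u (b' - b) for a unit u, and a + u b = a' + u b' forces a = a'.

   For the corollary, take a + b and a0 + b0 in Lambda_ij: their difference is
   a multiple of M/(p_i p_j), so it agrees modulo M/p_j with some f in F_i,
   and a0 + f lies in A.  The differences a - (a0 + f) and b0 - b then agree
   modulo M/p_j.  If p_j^(n_j - 1) did not divide a - (a0 + f), neither
   difference would be divisible by p_j^(n_j), so both would have the same
   gcd with M, giving a = a0 + f, a contradiction.  As p_j^(n_j - 1) also
   divides f, it divides a - a0. *)

Lemma sum_nat_gt0_eq_card (T : finType) (F : T -> nat) :
  (forall x, 0 < F x)%N -> (\sum_x F x = #|T|)%N -> forall x, F x = 1%N.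
Proof.
move=> F_gt0 sumF x; apply/esym/eqP.
have [_] := leqif_sum (fun y (_ : true) => leqif_eq (F_gt0 y)).
by rewrite sum1_card sumF eqxx => /esym/forall_inP->.
Qed.

Section Decompositions.
Variable M : nat.
Hypothesis M_gt1 : (1 < M)%N.

Definition decomp (f : 'Z_M -> 'Z_M) (A B : {set 'Z_M}) (c : 'Z_M) :=
  [set ab in setX A B | c == ab.1 + f ab.2].

Lemma tiling_card_decomp1 A B c : tiling A B -> #|decomp id A B c| = 1%N.
Proof.
case=> [cover uniq]; have [a [b [aA bB ->]]] := cover c.
apply/eqP/cards1P; exists (a, b); apply/setP => -[a' b'].
rewrite !inE xpair_eqE /= -andbA.
apply/idP/andP => [/and3P[a'A b'B /eqP ab]|[/eqP-> /eqP->]].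
  by have [-> ->] := uniq _ _ _ _ aA a'A bB b'B ab; rewrite !eqxx.
by rewrite aA bB eqxx.
Qed.

Lemma card_decomp1_tiling f A B :
  (forall c, #|decomp f A B c| = 1%N) -> tiling A (f @: B).
Proof.
move=> dec1; split=> [c | a a' _ _ aA a'A /imsetP[b bB ->] /imsetP[b' b'B ->] ab].
  have /eqP/cards1P[[a b] dec_c] := dec1 c.
  have : (a, b) \in decomp f A B c by rewrite dec_c set11.
  rewrite !inE /= => /andP[/andP[aA bB] /eqP->].
  by exists a, (f b); split=> //; apply: imset_f.
have /eqP/cards1P[ab0 dec_ab] := dec1 (a + f b).
have : (a', b') \in decomp f A B (a + f b) by rewrite !inE /= a'A b'B ab eqxx.
have : (a, b) \in decomp f A B (a + f b) by rewrite !inE /= aA bB eqxx.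
by rewrite dec_ab !inE => /eqP<- /eqP[-> ->].
Qed.

Lemma card_decompE f A B c :
  #|decomp f A B c| = (\sum_(a in A) \sum_(b in B) (c == a + f b)%R)%N.
Proof.
rewrite -sum1dep_card big_mkcondr pair_big /=.
by apply: eq_big => [[a b]|[a b] _]; rewrite ?in_setX.
Qed.

Lemma sum_card_decomp f A B : (\sum_c #|decomp f A B c| = #|A| * #|B|)%N.
Proof.
rewrite -cardsX -sum1_card.
under eq_bigr do rewrite -sum1dep_card big_mkcondr.
rewrite exchange_big /=; apply: eq_bigr => ab _.
by rewrite (bigD1 (ab.1 + f ab.2)) //= eqxx big1 // => c /negbTE->.
Qed.

Lemma tiling_card (A B : {set 'Z_M}) : tiling A B -> (#|A| * #|B| = M)%N.
Proof.
move=> tAB; rewrite -(sum_card_decomp id) (eq_bigr (fun _ => 1%N)) => [|c _].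
  by rewrite sum1_card card_ord Zp_cast.
exact: tiling_card_decomp1.
Qed.

End Decompositions.

Section ShiftMatrices.
Variables (M : nat) (R : nzRingType).
Local Notation n := (Zp_trunc M).+2.

(* [set_mx A] is the mask polynomial A(X) in the regular representation of
   the group ring R[Z_M]. *)
Definition shift_mx (g : 'Z_M) : 'M[R]_n := \matrix_(i, j) (j == i + g)%:R.

Definition set_mx (A : {set 'Z_M}) := \sum_(a in A) shift_mx a.

Lemma shift_mxD g h : shift_mx g * shift_mx h = shift_mx (g + h).
Proof.
apply/matrixP => i j; rewrite !mxE (bigD1 (i + g)) //= big1 => [|k /negbTE k_ne].
  by rewrite !mxE eqxx mul1r addr0 addrA.
by rewrite !mxE k_ne mul0r.
Qed.

Lemma shift_mx_comm g h : GRing.comm (shift_mx g) (shift_mx h).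
Proof. by rewrite /GRing.comm !shift_mxD addrC. Qed.

Lemma shift_mxMn g k : shift_mx g ^+ k = shift_mx (g *+ k).
Proof.
elim: k => [|k IHk]; last by rewrite exprS IHk shift_mxD mulrS.
by apply/matrixP => i j; rewrite !mxE addr0 eq_sym.
Qed.

Lemma mul_set_mx_sum_shift_mx (f : 'Z_M -> 'Z_M) (A B : {set 'Z_M}) (i j : 'Z_M) :
  (set_mx A * \sum_(b in B) shift_mx (f b)) i j = #|decomp f A B (j - i)|%:R.
Proof.
rewrite card_decompE mulr_suml summxE natr_sum; apply: eq_bigr => a _.
rewrite mulr_sumr summxE natr_sum; apply: eq_bigr => b _.
by rewrite shift_mxD mxE subr_eq addrC.
Qed.

Lemma tiling_mul_set_mx (A B : {set 'Z_M}) :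
  tiling A B -> set_mx A * set_mx B = const_mx 1.
Proof.
move=> tAB; apply/matrixP => i j.
by rewrite (mul_set_mx_sum_shift_mx id) tiling_card_decomp1 // !mxE.
Qed.

Lemma const_mx1_mul_shift_mx g : const_mx 1 * shift_mx g = const_mx 1.
Proof.
apply/matrixP => i j; rewrite !mxE (bigD1 (j - g)) //= big1 => [|k].
  by rewrite !mxE subrK eqxx mulr1 addr0.
by rewrite eq_sym subr_eq !mxE => /negbTE->; rewrite mulr0.
Qed.

Lemma const_mx1_mul_set_mxX B k :
  const_mx 1 * set_mx B ^+ k = const_mx 1 *+ (#|B| ^ k).
Proof.
elim: k => [|k IHk]; first by rewrite mulr1.
rewrite exprSr mulrA IHk mulrnAl mulr_sumr.
under eq_bigr do rewrite const_mx1_mul_shift_mx.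
by rewrite sumr_const -mulrnA expnS.
Qed.

End ShiftMatrices.

Arguments shift_mx {M R} g.
Arguments set_mx {M R} A.

Section PrimeDilation.
Variables (M p : nat).
Hypotheses (M_gt1 : (1 < M)%N) (p_pr : prime p).
Local Notation n := (Zp_trunc M).+2.

Lemma pchar_mx_Fp : p \in [pchar 'M['F_p]_n].
Proof. by rewrite pchar_lalg pchar_Fp. Qed.

Lemma set_mx_Frobenius (A : {set 'Z_M}) :
  set_mx A ^+ p = \sum_(a in A) shift_mx (a *+ p) :> 'M['F_p]_n.
Proof.
rewrite /set_mx; elim: (index_enum _) => [|g r IHr].
  by rewrite !big_nil expr0n gtn_eqF ?prime_gt0.
rewrite !big_cons; case: (g \in A) => //.
rewrite -!(pFrobenius_autE pchar_mx_Fp) pFrobenius_autD_comm; last first.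
  by apply: commr_sum => h _; apply: shift_mx_comm.
by rewrite !pFrobenius_autE IHr shift_mxMn.
Qed.

Lemma card_decomp_dilate_gt0 (A B : {set 'Z_M}) c :
  tiling A B -> ~~ (p %| #|B|)%N -> (0 < #|decomp (fun b => b *+ p) A B c|)%N.
Proof.
move=> tAB pB; rewrite lt0n; apply: contraNneq pB => dec0.
have := mul_set_mx_sum_shift_mx 'F_p (fun b => b *+ p) A B 0 c.
have -> : set_mx A * \sum_(b in B) shift_mx (b *+ p) =
          set_mx A * set_mx B * set_mx B ^+ p.-1 :> 'M['F_p]_n.
  by rewrite -set_mx_Frobenius -mulrA -exprS prednK // prime_gt0.
rewrite tiling_mul_set_mx // const_mx1_mul_set_mxX mulmxnE mxE subr0 dec0 => /eqP.
by rewrite -(dvdn_pcharf (pchar_Fp p_pr)) Euclid_dvdX // => /andP[].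
Qed.

Lemma tiling_dilate_prime (A B : {set 'Z_M}) :
  tiling A B -> ~~ (p %| #|B|)%N -> tiling A [set b *+ p | b in B].
Proof.
move=> tAB pB; apply: card_decomp1_tiling; apply: sum_nat_gt0_eq_card => [c|].
  exact: card_decomp_dilate_gt0.
by rewrite sum_card_decomp tiling_card // card_ord Zp_cast.
Qed.

End PrimeDilation.

Lemma tiling_dilate (M u : nat) (A B : {set 'Z_M}) :
  (1 < M)%N -> coprime u M -> tiling A B -> tiling A [set b *+ u | b in B].
Proof.
move=> M_gt1; elim/ltn_ind: u B => u IHu B co_uM tAB.
have [u_le1 | u_gt1] := leqP u 1.
  case: u u_le1 co_uM {IHu} => [_|[_ _|//]].
    by rewrite /coprime gcd0n => /eqP M1; rewrite M1 in M_gt1.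
  by rewrite (eq_imset _ (@mulr1n _)) imset_id.
have p_pr := pdiv_prime u_gt1; set p := pdiv u in p_pr.
have p_dvd_u : (p %| u)%N by apply: pdiv_dvd.
have co_pM : coprime p M by apply: coprime_dvdl co_uM.
have tvB := IHu _ (ltn_Pdiv (prime_gt1 p_pr) (ltnW u_gt1)) B
  (coprime_dvdl (dvdn_div p_dvd_u) co_uM) tAB.
have pB : ~~ (p %| #|[set b *+ (u %/ p) | b in B]|)%N.
  apply: contraL co_pM => p_dvd_B; rewrite prime_coprime // negbK.
  by rewrite -(tiling_card M_gt1 tvB) dvdn_mull.
have := tiling_dilate_prime M_gt1 p_pr tvB pB.
by rewrite -imset_comp; under eq_imset do rewrite /= -mulrnA divnK //.
Qed.

Lemma coprime_modn_inv x m : coprime x m -> exists k, (k * x = 1 %[mod m])%N.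
Proof.
have [->|x_gt0] := posnP x.
  by rewrite /coprime gcd0n => /eqP->; exists 0%N; rewrite !modn1.
by case: (egcdnP m x_gt0) => km kn def1 _ /eqP co; exists km; rewrite def1 co modnMDl.
Qed.

Lemma coprime_lift k m M : (0 < M)%N -> (m %| M)%N -> coprime k m ->
  exists2 u, coprime u M & (u = k %[mod m])%N.
Proof.
move=> M_gt0 m_dvd_M co_km.
(* Every prime factor of M divides exactly one of t * m and k. *)
pose t := (\prod_(q <- primes M | ~~ (q %| k)) q)%N.
exists (t * m + k)%N; last by rewrite modnMDl.
have t_gt0 : (0 < t)%N.
  rewrite /t big_seq_cond prodn_cond_gt0 // => q /andP[+ _].
  by rewrite mem_primes => /and3P[/prime_gt0].
have m_gt0 : (0 < m)%N := dvdn_gt0 M_gt0 m_dvd_M.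
rewrite coprime_has_primes ?addn_gt0 ?muln_gt0 ?t_gt0 ?m_gt0 //.
apply/hasPn => q; rewrite mem_primes M_gt0 /= => /andP[q_pr q_M].
have q_dvd_t : (q %| t)%N = ~~ (q %| k)%N.
  rewrite Euclid_dvd_prod // big_has_cond; apply/hasP/idP => [[q' q'_M /andP[q'_k]]|q_k].
    move: q'_M; rewrite mem_primes => /andP[q'_pr _].
    by rewrite dvdn_prime2 // => /eqP q_eq; rewrite q_eq.
  by exists q; rewrite /= ?q_k ?dvdnn // mem_primes q_pr M_gt0.
rewrite mem_primes q_pr /= negb_and orbC.
have [q_k | q_nk] := boolP (q %| k)%N.
  have q_nm : ~~ (q %| m)%N by rewrite -prime_coprime // (coprime_dvdl q_k co_km).
  by rewrite dvdn_addl // Euclid_dvdM // q_dvd_t q_k (negbTE q_nm).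
by rewrite dvdn_addr ?dvdn_mulr ?q_dvd_t ?q_nk.
Qed.

Lemma coprime_divn_gcdn m n : (0 < n)%N -> coprime (m %/ gcdn m n) (n %/ gcdn m n).
Proof.
move=> n_gt0; have g_gt0 : (0 < gcdn m n)%N by rewrite gcdn_gt0 n_gt0 orbT.
rewrite /coprime -(eqn_pmul2l g_gt0) muln_gcdr muln1.
by rewrite ![(gcdn m n * _)%N]mulnC !divnK ?dvdn_gcdl ?dvdn_gcdr.
Qed.

Lemma gcdn_eq_coprime_mul M x y : (0 < M)%N -> gcdn x M = gcdn y M ->
  exists2 u, coprime u M & (y = u * x %[mod M])%N.
Proof.
move=> M_gt0 gxy; set g := gcdn x M.
have co_x := coprime_divn_gcdn x M_gt0; have co_y := coprime_divn_gcdn y M_gt0.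
rewrite -/g -gxy -/g in co_x co_y.
set x' := (x %/ g)%N in co_x *; set y' := (y %/ g)%N in co_y *.
set M' := (M %/ g)%N in co_x co_y *.
have [k kx] := coprime_modn_inv co_x.
have co_k : coprime k M'.
  by have := coprime1n M'; rewrite -coprime_modl -kx coprime_modl coprimeMl => /andP[].
have M'_dvd_M : (M' %| M)%N by rewrite dvdn_div ?dvdn_gcdr.
have co_ky : coprime (k * y') M' by rewrite coprimeMl co_k co_y.
have [u co_u uk] := coprime_lift M_gt0 M'_dvd_M co_ky.
exists u => //.
have Ex : x = (x' * g)%N by rewrite divnK ?dvdn_gcdl.
have Ey : y = (y' * g)%N by rewrite divnK // /g gxy dvdn_gcdl.
have EM : M = (M' * g)%N by rewrite divnK ?dvdn_gcdr.
rewrite Ey Ex EM mulnA -!muln_modl; congr (_ * g)%N.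
by rewrite -modnMml uk modnMml mulnAC -modnMml kx modnMml mul1n.
Qed.

Lemma dvdn_divn_prime M p g : (0 < M)%N -> prime p -> (g %| M)%N ->
  ~~ (p ^ logn p M %| g)%N -> (g %| M %/ p)%N.
Proof.
move=> M_gt0 p_pr g_dvd_M; have M_eq : M = (g * (M %/ g))%N by rewrite mulnC divnK.
set h := (M %/ g)%N in M_eq; rewrite M_eq.
have /andP[g_gt0 h_gt0] : (0 < g)%N && (0 < h)%N by rewrite -muln_gt0 -M_eq.
have [p_h _ | p_nh] := boolP (p %| h)%N; first by rewrite -muln_divA ?dvdn_mulr.
by rewrite lognM // [logn p h]logn_coprime ?prime_coprime // addn0 pfactor_dvdnn.
Qed.

Section ZpDivisibility.
Variable M : nat.
Hypothesis M_gt1 : (1 < M)%N.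
Implicit Types (x y r : 'Z_M) (d : nat).

Lemma ltn_Zp x : (x < M)%N.
Proof. by have := ltn_ord x; rewrite [in X in (_ < X)%N -> _]Zp_cast. Qed.

Lemma dvdn_Zp_natr d m : (d %| M)%N -> (d %| (m%:R : 'Z_M))%N = (d %| m)%N.
Proof. by move=> d_M; rewrite val_Zp_nat // [in RHS](divn_eq m M) dvdn_addr ?dvdn_mull. Qed.

Lemma dvdn_ZpD d x y : (d %| M)%N -> (d %| (x + y)%R)%N = (d %| x + y)%N.
Proof.
move=> d_M; have -> : x + y = (x + y)%N%:R :> 'Z_M by rewrite natrD !natr_Zp.
exact: dvdn_Zp_natr.
Qed.

Lemma dvdn_ZpN d x : (d %| M)%N -> (d %| (- x)%R)%N = (d %| x)%N.
Proof.
by move=> d_M; apply: dvdn_add_eq; rewrite -dvdn_ZpD // addNr.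
Qed.

Lemma dvdn_ZpB d x y : (d %| M)%N -> (d %| x)%N -> (d %| y)%N -> (d %| (x - y)%R)%N.
Proof. by move=> d_M d_x d_y; rewrite dvdn_ZpD // dvdn_add ?dvdn_ZpN. Qed.

Lemma dvdn_ZpB_natr d m n : (d %| M)%N -> (m = n %[mod d])%N ->
  (d %| (m%:R - n%:R : 'Z_M)%R)%N.
Proof.
move=> d_M mn; rewrite (divn_eq m d) (divn_eq n d) mn !natrD opprD addrACA subrr addr0.
by rewrite dvdn_ZpB ?dvdn_Zp_natr ?dvdn_mull.
Qed.

Lemma gcdn_ZpD_dvdn p x r : prime p -> (M %/ p %| r)%N ->
  ~~ (p ^ logn p M %| x)%N -> (gcdn x M %| gcdn (x + r)%R M)%N.
Proof.
move=> p_pr Mp_r p_x; set g := gcdn x M.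
have g_Mp : (g %| M %/ p)%N.
  apply: dvdn_divn_prime (ltnW M_gt1) p_pr (dvdn_gcdr _ _) _.
  by apply: contra p_x => /dvdn_trans; apply; apply: dvdn_gcdl.
rewrite dvdn_gcd dvdn_gcdr andbT dvdn_ZpD ?dvdn_gcdr // dvdn_add ?dvdn_gcdl //.
exact: dvdn_trans g_Mp Mp_r.
Qed.

Lemma gcdn_ZpD p x r : prime p -> (p %| M)%N -> (M %/ p %| r)%N ->
  ~~ (p ^ logn p M %| x)%N -> ~~ (p ^ logn p M %| (x + r)%R)%N ->
  gcdn (x + r)%R M = gcdn x M.
Proof.
move=> p_pr p_M Mp_r p_x p_xr; apply/eqP; rewrite eqn_dvd (gcdn_ZpD_dvdn p_pr) // andbT.
have := gcdn_ZpD_dvdn (r := - r) p_pr _ p_xr; rewrite addrK; apply.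
by rewrite dvdn_ZpN ?dvdn_div.
Qed.

Lemma Zp_gcdn_eq_mul x y : gcdn x M = gcdn y M -> exists2 u, coprime u M & y = x *+ u.
Proof.
move=> /(gcdn_eq_coprime_mul (ltnW M_gt1))[u co_u yu]; exists u => //.
apply: val_inj; rewrite Zp_mulrn /= [X in (_ %% X)%N]Zp_cast //.
by rewrite mulnC -yu modn_small ?ltn_Zp.
Qed.

End ZpDivisibility.

Section TilingDifferences.
Variable M : nat.
Hypothesis M_gt1 : (1 < M)%N.
Variables (A B : {set 'Z_M}).
Hypothesis tAB : tiling A B.

Lemma tiling_gcdn_diff_eq a a' b b' : a \in A -> a' \in A -> b \in B -> b' \in B ->
  gcdn (b' - b)%R M = gcdn (a - a')%R M -> a = a'.
Proof.
move=> aA a'A bB b'B /Zp_gcdn_eq_mul[//| u co_u Ea].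
have [_ uniq] := tiling_dilate M_gt1 co_u tAB.
apply: (proj1 (uniq a a' (b *+ u) (b' *+ u) aA a'A (imset_f _ bB) (imset_f _ b'B) _)).
have -> : a = a' + (b' - b) *+ u by rewrite -Ea addrC subrK.
ring.
Qed.

Lemma tiling_dvdn_diff p a a' b b' : prime p -> (p %| M)%N ->
  a \in A -> a' \in A -> b \in B -> b' \in B ->
  (M %/ p %| ((a + b) - (a' + b'))%R)%N -> (p ^ (logn p M).-1 %| (a - a')%R)%N.
Proof.
move=> p_pr p_M aA a'A bB b'B Mp_w; set e := logn p M; set q := (p ^ e.-1)%N.
have e_gt0 : (0 < e)%N by rewrite logn_gt0 mem_primes p_pr (ltnW M_gt1) p_M.
have q_pe : (q %| p ^ e)%N by rewrite dvdn_exp2l ?leq_pred.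
have q_Mp : (q %| M %/ p)%N.
  by rewrite -(dvdn_pmul2l (prime_gt0 p_pr)) -expnS prednK // mulnC divnK ?pfactor_dvdnn.
have Mp_M : (M %/ p %| M)%N by apply: dvdn_div.
have q_M : (q %| M)%N := dvdn_trans q_Mp Mp_M.
have not_pe z : ~~ (q %| z)%N -> ~~ (p ^ e %| z)%N by apply: contra; apply: dvdn_trans.
apply/contraT => q_na.
have E : a - a' = (b' - b) + ((a + b) - (a' + b')) by ring.
have q_nb : ~~ (q %| (b' - b)%R)%N.
  by apply: contra q_na => q_b; rewrite E dvdn_ZpD // dvdn_add // (dvdn_trans q_Mp Mp_w).
have a_eq : a = a'.
  apply: (tiling_gcdn_diff_eq aA a'A bB b'B).
  rewrite E (gcdn_ZpD M_gt1 p_pr (x := b' - b)) //.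
    exact: not_pe.
  by rewrite -E; apply: not_pe.
by move: q_na; rewrite a_eq subrr dvdn0.
Qed.

End TilingDifferences.

Lemma Fset_dvdn M p f : (1 < M)%N -> (p %| M)%N -> f \in Fset M p -> (M %/ p %| f)%N.
Proof. by move=> M_gt1 p_M /imsetP[k _ ->]; rewrite dvdn_Zp_natr ?dvdn_mull ?dvdn_div. Qed.

Lemma Fset_cover M pi pj (w : 'Z_M) : (1 < M)%N -> prime pi -> prime pj -> pi != pj ->
  (pi * pj %| M)%N -> (M %/ (pi * pj) %| w)%N ->
  exists2 f, f \in Fset M pi & (M %/ pj %| (w - f)%R)%N.
Proof.
move=> M_gt1 pi_pr pj_pr pi_pj pipj_M; set N := (M %/ (pi * pj))%N => N_w.
have M_eq : M = (N * pi * pj)%N by rewrite -mulnA divnK.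
have [k0 k0_pj] : exists k0, (k0 * pj = 1 %[mod pi])%N.
  by apply: coprime_modn_inv; rewrite prime_coprime // dvdn_prime2 // eq_sym.
set t := (w %/ N)%N; pose k := Ordinal (ltn_pmod (k0 * t) (prime_gt0 pi_pr)).
exists (k * (M %/ pi))%N%:R; first by apply/imsetP; exists k.
have pj_M : (pj %| M)%N := dvdn_trans (dvdn_mull _ (dvdnn _)) pipj_M.
rewrite -[w]natr_Zp -(divnK N_w) -/t dvdn_ZpB_natr ?dvdn_div //.
rewrite M_eq mulnK ?prime_gt0 // mulnAC mulnK ?prime_gt0 //.
rewrite [(t * N)%N]mulnC mulnCA -!muln_modr; congr (N * _)%N.
by rewrite /= modnMml mulnAC -modnMml k0_pj modnMml mul1n.
Qed.

Theorem corollary7p2 (M pi pj : nat) (A B : {set 'Z_M}) (z a0 : 'Z_M) :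
  (0 < M)%N -> prime pi -> prime pj -> pi != pj ->
  (pi %| M)%N -> (pj %| M)%N ->
  tiling A B ->
  a0 \in SigmaA A B (Lambda z (M %/ (pi * pj))) ->
  shiftF pi a0 \subset A ->
  SigmaA A B (Lambda z (M %/ (pi * pj))) \subset Pi a0 pj (logn pj M).-1.
Proof.
move=> M_gt0 pi_pr pj_pr pi_pj pi_M pj_M tAB a0S a0F_A.
have M_gt1 : (1 < M)%N := leq_trans (prime_gt1 pi_pr) (dvdn_leq M_gt0 pi_M).
have co_pj_pi : coprime pj pi by rewrite prime_coprime // dvdn_prime2 // eq_sym.
have pipj_M : (pi * pj %| M)%N by rewrite Gauss_dvd 1?coprime_sym ?pi_M.
have q_Mpi : (pj ^ (logn pj M).-1 %| M %/ pi)%N.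
  apply: dvdn_trans (dvdn_exp2l _ (leq_pred _)) _.
  by rewrite -(Gauss_dvdl _ (coprimeXl _ co_pj_pi)) divnK ?pfactor_dvdnn.
have q_M := dvdn_trans q_Mpi (dvdn_div pi_M).
move: a0S; rewrite inE => /andP[_ /exists_inP[b0 b0B]]; rewrite inE => z_a0b0.
apply/subsetP => a; rewrite inE => /andP[aA /exists_inP[b bB]]; rewrite inE => z_ab.
have N_w : (M %/ (pi * pj) %| ((a + b) - (a0 + b0))%R)%N.
  have -> : (a + b) - (a0 + b0) = (z - (a0 + b0)) - (z - (a + b)) by ring.
  by rewrite dvdn_ZpB ?dvdn_div.
have [f f_F Mpj_wf] := Fset_cover M_gt1 pi_pr pj_pr pi_pj pipj_M N_w.
have a0f_A : a0 + f \in A by apply: (subsetP a0F_A); apply: imset_f.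
have q_a : (pj ^ (logn pj M).-1 %| (a - (a0 + f))%R)%N.
  apply: (tiling_dvdn_diff M_gt1 tAB pj_pr pj_M aA a0f_A bB b0B).
  by have -> : a + b - (a0 + f + b0) = a + b - (a0 + b0) - f by ring.
rewrite /Pi /Lambda inE.
have -> : a0 - a = - ((a - (a0 + f)) + f) by ring.
by rewrite dvdn_ZpN ?dvdn_ZpD // dvdn_add // (dvdn_trans q_Mpi) ?(Fset_dvdn M_gt1).
Qed.
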